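(* If $(S,K,I)$ is a split graph, then the factor graph $\Phi(S)$ cannot contain an induced path $v_1v_2v_3v_4$ with $\sigma_{23}=1$ and $d_1\leq d_2\geq d_4$.
   Context: A split graph $(S,K,I)$ is a graph $S$ together with a fixed partition $V(S)=K\dot\cup I$, where $K$ is a clique and $I$ is an independent set. For a vertex $v_i$ of $S$, $N_i$ denotes its open neighborhood in $S$ and $d_i=|N_i|$; $\eta_{uv}=|N_u\cap N_v|$. The factor graph $\Phi(S)$ is the loopless multigraph with vertex set $I$ in which, for distinct $u,v\in I$, there is one edge joining $u$ and $v$ for each 2-switch of $S$ acting on $u$ and $v$ (a 2-switch replaces edges $ab,cd$ with $ac,bd$ when $ab,cd\in E(S)$ and $ac,bd\notin E(S)$); equivalently, the multiplicity of $uv$ is $\sigma_{uv}=(d_u-\eta_{uv})(d_v-\eta_{uv})$, and $u,v$ are adjacent iff $\sigma_{uv}>0$; $\sigma_{ij}$ denotes $\sigma_{v_iv_j}$. An induced path in $\Phi(S)$ consists of distinct vertices with consecutive ones adjacent and no other pair adjacent (multiplicities ignored). *)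

From mathcomp Require Import all_boot.
Set Implicit Arguments. Unset Strict Implicit. Unset Printing Implicit Defensive.

Definition simple_graph (T : finType) (e : rel T) : Prop :=
  symmetric e /\ irreflexive e.

Definition split_graph (T : finType) (e : rel T) (K I : {set T}) : Prop :=
  [/\ simple_graph e,
      [disjoint K & I], K :|: I = [set: T],
      {in K &, forall u v, u != v -> e u v} &
      {in I &, forall u v, ~~ e u v}].

Section FactorGraph.
Variables (T : finType) (e : rel T).

Definition nbhd (v : T) : {set T} := [set w | e v w].
Definition deg (v : T) : nat := #|nbhd v|.
Definition eta (u v : T) : nat := #|nbhd u :&: nbhd v|.
(* multiplicity of uv in the factor graph Phi(S) *)
Definition sigma (u v : T) : nat := (deg u - eta u v) * (deg v - eta u v).

Definition phi_adj (I : {set T}) (u v : T) : bool :=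
  [&& u \in I, v \in I, u != v & 0 < sigma u v].

Definition phi_induced_P4 (I : {set T}) (v1 v2 v3 v4 : T) : Prop :=
  [/\ v1 \in I, v2 \in I, v3 \in I & v4 \in I] /\
  uniq [:: v1; v2; v3; v4] /\
  [/\ phi_adj I v1 v2, phi_adj I v2 v3 & phi_adj I v3 v4] /\
  [/\ ~~ phi_adj I v1 v3, ~~ phi_adj I v1 v4 & ~~ phi_adj I v2 v4].
End FactorGraph.

From mathcomp Require Import all_boot.
Set Implicit Arguments. Unset Strict Implicit. Unset Printing Implicit Defensive.

(* Since sigma_uv = |N_u \ N_v| * |N_v \ N_u|, two distinct vertices of I are
   adjacent in Phi(S) exactly when their neighbourhoods are not nested, and
   sigma_23 = 1 means that N_2 and N_3 differ by one vertex a of N_2 and one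
   vertex b of N_3, so d_2 = d_3.  The degree conditions then force
   N_1 <= N_3 and N_4 <= N_2, so v1 ~ v2 puts b into N_1 and v3 ~ v4 puts a
   into N_4.  Hence N_1 <= N_4 would put b into N_2, and N_4 <= N_1 would put
   a into N_3, contradicting v1 !~ v4. *)

Section NestedSets.
Variable T : finType.
Implicit Types A B C D : {set T}.

Definition nested A B := (A \subset B) || (B \subset A).

Lemma nestedC A B : nested A B = nested B A.
Proof. by rewrite /nested orbC. Qed.

Lemma nested_card_subset A B : nested A B -> #|A| <= #|B| -> A \subset B.
Proof.
case/orP=> [//|sBA] leAB.
by have /eqP-> : B == A by rewrite eqEcard sBA.
Qed.

Lemma card_eq_setD A B : #|A :\: B| = #|B :\: A| -> #|A| = #|B|.
Proof. by move=> eqD; rewrite -(cardsID B A) -(cardsID A B) eqD setIC. Qed.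

Lemma setD_card1_subset A B C :
  A \subset C -> #|C :\: B| = 1 -> ~~ (A \subset B) -> C :\: B \subset A.
Proof.
move=> sAC /eqP/cards1P[b CBb] /subsetPn[x Ax Bx].
have : x \in C :\: B by rewrite inE Bx (subsetP sAC).
by rewrite CBb sub1set inE => /eqP <-.
Qed.

Lemma setD_subset_trans A B C : A :\: B \subset C -> C \subset B -> A \subset B.
Proof.
by move=> sABC sCB; rewrite -(setUid B) -subDset (subset_trans sABC sCB).
Qed.

Lemma setD_card1_nsubset A B : #|A :\: B| = 1 -> ~~ (A \subset B).
Proof.
by move=> AB1; apply/negP; rewrite -setD_eq0 => /eqP AB0; rewrite AB0 cards0 in AB1.
Qed.

Lemma nested_swap_card1_contra A B C D :
  #|B :\: C| = 1 -> #|C :\: B| = 1 ->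
  ~~ nested A B -> ~~ nested C D ->
  nested A C -> nested B D -> nested A D ->
  #|A| <= #|B| -> #|D| <= #|B| -> False.
Proof.
rewrite /nested !negb_or => BC1 CB1 /andP[nAB _] /andP[_ nDC] nAC nBD nAD leAB leDB.
have eqBC : #|B| = #|C| by apply: card_eq_setD; rewrite BC1 CB1.
have sAC : A \subset C by rewrite nested_card_subset // -eqBC.
have sDB : D \subset B by rewrite nested_card_subset // nestedC.
have sCBA := setD_card1_subset sAC CB1 nAB.
have sBCD := setD_card1_subset sDB BC1 nDC.
case/orP: nAD => [sAD|sDA].
- by move/setD_card1_nsubset: CB1; rewrite (setD_subset_trans sCBA) // (subset_trans sAD).
- by move/setD_card1_nsubset: BC1; rewrite (setD_subset_trans sBCD) // (subset_trans sDA).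
Qed.

End NestedSets.

Section FactorGraphAdjacency.
Variables (T : finType) (e : rel T).

Lemma sigmaE u v :
  sigma e u v = #|nbhd e u :\: nbhd e v| * #|nbhd e v :\: nbhd e u|.
Proof. by rewrite /sigma /deg /eta !cardsD setIC. Qed.

Lemma sigma_gt0 u v : (0 < sigma e u v) = ~~ nested (nbhd e u) (nbhd e v).
Proof. by rewrite sigmaE muln_gt0 !card_gt0 !setD_eq0 /nested negb_or. Qed.

Lemma sigma_eq1 u v : sigma e u v = 1 ->
  #|nbhd e u :\: nbhd e v| = 1 /\ #|nbhd e v :\: nbhd e u| = 1.
Proof. by rewrite sigmaE => /eqP; rewrite muln_eq1 => /andP[/eqP-> /eqP->]. Qed.

Lemma phi_adj_nnested (I : {set T}) u v :
  phi_adj e I u v -> ~~ nested (nbhd e u) (nbhd e v).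
Proof. by case/and4P=> _ _ _; rewrite sigma_gt0. Qed.

Lemma nphi_adj_nested (I : {set T}) u v : u \in I -> v \in I -> u != v ->
  ~~ phi_adj e I u v -> nested (nbhd e u) (nbhd e v).
Proof. by move=> uI vI uv; rewrite /phi_adj uI vI uv sigma_gt0 negbK. Qed.

End FactorGraphAdjacency.

Theorem lemma4p2 (T : finType) (e : rel T) (K I : {set T}) :
  split_graph e K I ->
  ~ exists v1 v2 v3 v4 : T,
      [/\ phi_induced_P4 e I v1 v2 v3 v4,
          sigma e v2 v3 = 1,
          deg e v1 <= deg e v2 &
          deg e v4 <= deg e v2].
Proof.
move=> _ [v1 [v2 [v3 [v4 [[[I1 I2 I3 I4] [uniq_v [[a12 _ a34] [n13 n14 n24]]]] s23 d12 d42]]]]].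
move: uniq_v; rewrite /= !inE !negb_or => /and4P[/and3P[_ v13 v14] /andP[_ v24] _ _].
have [c23 c32] := sigma_eq1 s23.
exact: (nested_swap_card1_contra c23 c32 (phi_adj_nnested a12)
  (phi_adj_nnested a34) (nphi_adj_nested I1 I3 v13 n13)
  (nphi_adj_nested I2 I4 v24 n24) (nphi_adj_nested I1 I4 v14 n14) d12 d42).
Qed.
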